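(* The Heawood graph is $4$-ordered hamiltonian.
   Context: A simple graph $G$ is called $k$-ordered hamiltonian if for every sequence $v_1,\ldots,v_k$ of $k$ distinct vertices of $G$ there exists a hamiltonian cycle in $G$ (a cycle through all vertices) containing these $k$ vertices in the specified (cyclic) order. The Heawood graph is the $3$-regular bipartite graph on $14$ vertices given by the point–line incidence graph of the Fano plane; equivalently, it is the graph with vertices $0,1,\ldots,13$ forming a hamiltonian cycle $0-1-2-\cdots-13-0$, together with the chords joining $i$ and $i+5 \pmod{14}$ for every even $i$. *)

From mathcomp Require Import all_boot.
Set Implicit Arguments. Unset Strict Implicit. Unset Printing Implicit Defensive.

(* A simple graph is a symmetric irreflexive relation [adj] on a finite type. *)

Definition hamiltonian_cycle (T : finType) (adj : rel T) (c : seq T) : bool :=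
  [&& uniq c, all (fun v => v \in c) (enum T) & cycle adj c].

Definition in_cyclic_order (T : eqType) (s c : seq T) : Prop :=
  exists r : nat, subseq s (rot r c).

Definition k_ordered_hamiltonian (T : finType) (adj : rel T) (k : nat) : Prop :=
  forall s : seq T, size s = k -> uniq s ->
    exists c : seq T, hamiltonian_cycle adj c /\ in_cyclic_order s c.

Definition heawood_arc (i j : nat) : bool :=
  (j == i.+1 %% 14) || (~~ odd i && (j == (i + 5) %% 14)).

Definition heawood_adj : rel 'I_14 :=
  fun i j => heawood_arc i j || heawood_arc j i.

Lemma heawood_sym : symmetric heawood_adj.
Proof. by move=> i j; rewrite /heawood_adj orbC. Qed.

Lemma heawood_irrefl : irreflexive heawood_adj.
Proof. by move=> i; apply/negP; case: i; do 14?case=> //. Qed.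

From mathcomp Require Import all_boot.

Set Implicit Arguments.
Unset Strict Implicit.
Unset Printing Implicit Defensive.

(* The maps i |-> x + i (x even) and i |-> x - i (x odd), taken mod 14, are
   automorphisms of the Heawood graph sending 0 to x.  The graph is therefore
   vertex-transitive, and it suffices to prescribe sequences starting at 0.
   Every ordered triple of further vertices then occurs, in that order, on one
   of the 48 hamiltonian cycles starting at 0 (the 24 hamiltonian cycles of the
   graph, each traversed in both directions), which is checked by computation. *)

Lemma in_cyclic_order_map (T U : eqType) (f : T -> U) (s c : seq T) :
  in_cyclic_order s c -> in_cyclic_order (map f s) (map f c).
Proof. by case=> r sub_s; exists r; rewrite -map_rot map_subseq. Qed.

Lemma hamiltonian_cycle_map (T U : finType) (adjT : rel T) (adjU : rel U)
    (f : T -> U) (c : seq T) :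
  bijective f -> {mono f : u v / adjT u v >-> adjU u v} ->
  hamiltonian_cycle adjT c -> hamiltonian_cycle adjU (map f c).
Proof.
case=> g fK gK f_mono /and3P[uniq_c all_c cycle_c]; apply/and3P; split.
- by rewrite (map_inj_uniq (can_inj fK)).
- by apply/allP=> v _; rewrite -[v]gK map_f // (allP all_c) ?mem_enum.
- by rewrite cycle_map (eq_cycle f_mono).
Qed.

Lemma k_ordered_hamiltonian_transitive (T : finType) (adj : rel T) (v0 : T)
    (k : nat) :
  (forall x, exists f : T -> T,
     [/\ bijective f, {mono f : u v / adj u v} & f v0 = x]) ->
  (forall s, size s = k -> uniq (v0 :: s) ->
     exists c, hamiltonian_cycle adj c /\ in_cyclic_order (v0 :: s) c) ->
  k_ordered_hamiltonian adj k.+1.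
Proof.
move=> transitive from_v0 [//|x s] [size_s] uniq_xs.
have [f [[g fK gK] f_mono fv0]] := transitive x.
have gx : g x = v0 by rewrite -fv0 fK.
have uniq_v0s : uniq (v0 :: map g s).
  by rewrite -gx -[_ :: _]/(map g (x :: s)) (map_inj_uniq (can_inj gK)).
have [c [ham_c ord_c]] := from_v0 _ (etrans (size_map g s) size_s) uniq_v0s.
exists (map f c); split.
  exact: hamiltonian_cycle_map (Bijective fK gK) f_mono ham_c.
have := in_cyclic_order_map f ord_c.
by rewrite /= fv0 -map_comp (eq_map gK) map_id.
Qed.

Lemma map_val_inord (n : nat) (s : seq nat) :
  {in s, forall i, i < n.+1} -> map val (map (@inord n) s) = s.
Proof. by move=> s_lt; rewrite -map_comp; apply: map_id_in => i /s_lt/inordK. Qed.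

Lemma ord_mem_iota (n : nat) (i : 'I_n) : val i \in iota 0 n.
Proof. by rewrite mem_iota add0n ltn_ord. Qed.

Lemma hamiltonian_cycle_ord (n : nat) (e : rel nat) (c : seq 'I_n) :
  perm_eq (map val c) (iota 0 n) -> cycle e (map val c) ->
  hamiltonian_cycle (relpre val e) c.
Proof.
move=> perm_c cycle_c; apply/and3P; split.
- by rewrite -(map_inj_uniq val_inj) (perm_uniq perm_c) iota_uniq.
- by apply/allP=> v _; rewrite -(mem_map val_inj) (perm_mem perm_c) ord_mem_iota.
- by rewrite -cycle_map.
Qed.

Definition heawood_adjn : rel nat := fun i j => heawood_arc i j || heawood_arc j i.

(* [+ 14] avoids truncated subtraction. *)
Definition heawood_dihedral (x i : nat) : nat :=
  (if odd x then x + 14 - i else x + i) %% 14.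

Lemma heawood_dihedral_aut :
  all (fun x => all (fun i => all (fun j =>
      (heawood_adjn (heawood_dihedral x i) (heawood_dihedral x j) == heawood_adjn i j)
      && ((heawood_dihedral x i == heawood_dihedral x j) == (i == j)))
    (iota 0 14)) (iota 0 14)) (iota 0 14).
Proof. by vm_compute. Qed.

Lemma heawood_vertex_transitive (x : 'I_14) :
  exists f : 'I_14 -> 'I_14,
    [/\ bijective f, {mono f : u v / heawood_adj u v} & f ord0 = x].
Proof.
pose f (i : 'I_14) : 'I_14 := inord (heawood_dihedral x i).
have val_f (i : 'I_14) : f i = heawood_dihedral x i :> nat by rewrite inordK // ltn_pmod.
have aut (i j : 'I_14) := allP (allP (allP heawood_dihedral_aut _ (ord_mem_iota x))
  _ (ord_mem_iota i)) _ (ord_mem_iota j).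
exists f; split.
- apply: injF_bij => i j /(congr1 val) /=; rewrite !val_f => /eqP.
  by case/andP: (aut i j) => _ /eqP -> /eqP/val_inj.
- move=> i j; change (heawood_adjn (f i) (f j) = heawood_adjn i j).
  by rewrite !val_f; case/andP: (aut i j) => /eqP.
- apply: val_inj => /=; rewrite val_f /heawood_dihedral subn0 addn0.
  by case: odd; rewrite ?modnDr modn_small.
Qed.

Definition heawood_cycles : seq (seq nat) :=
[:: [:: 0; 1; 2; 3; 4; 9; 10; 11; 12; 13; 8; 7; 6; 5];
 [:: 0; 1; 2; 3; 4; 5; 6; 7; 8; 9; 10; 11; 12; 13];
 [:: 0; 1; 2; 3; 12; 11; 10; 9; 4; 5; 6; 7; 8; 13];
 [:: 0; 1; 2; 3; 12; 13; 8; 7; 6; 11; 10; 9; 4; 5];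
 [:: 0; 1; 2; 7; 8; 9; 10; 11; 6; 5; 4; 3; 12; 13];
 [:: 0; 1; 2; 7; 8; 13; 12; 3; 4; 9; 10; 11; 6; 5];
 [:: 0; 1; 2; 7; 6; 11; 10; 9; 8; 13; 12; 3; 4; 5];
 [:: 0; 1; 2; 7; 6; 5; 4; 3; 12; 11; 10; 9; 8; 13];
 [:: 0; 1; 10; 9; 8; 13; 12; 11; 6; 7; 2; 3; 4; 5];
 [:: 0; 1; 10; 9; 8; 7; 2; 3; 4; 5; 6; 11; 12; 13];
 [:: 0; 1; 10; 9; 4; 3; 2; 7; 8; 13; 12; 11; 6; 5];
 [:: 0; 1; 10; 9; 4; 5; 6; 11; 12; 3; 2; 7; 8; 13];
 [:: 0; 1; 10; 11; 12; 3; 2; 7; 6; 5; 4; 9; 8; 13];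
 [:: 0; 1; 10; 11; 12; 13; 8; 9; 4; 3; 2; 7; 6; 5];
 [:: 0; 1; 10; 11; 6; 5; 4; 9; 8; 7; 2; 3; 12; 13];
 [:: 0; 1; 10; 11; 6; 7; 2; 3; 12; 13; 8; 9; 4; 5];
 [:: 0; 13; 8; 9; 10; 11; 12; 3; 4; 5; 6; 7; 2; 1];
 [:: 0; 13; 8; 9; 10; 1; 2; 7; 6; 11; 12; 3; 4; 5];
 [:: 0; 13; 8; 9; 4; 3; 12; 11; 10; 1; 2; 7; 6; 5];
 [:: 0; 13; 8; 9; 4; 5; 6; 7; 2; 3; 12; 11; 10; 1];
 [:: 0; 13; 8; 7; 2; 1; 10; 9; 4; 3; 12; 11; 6; 5];
 [:: 0; 13; 8; 7; 2; 3; 12; 11; 6; 5; 4; 9; 10; 1];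
 [:: 0; 13; 8; 7; 6; 11; 12; 3; 2; 1; 10; 9; 4; 5];
 [:: 0; 13; 8; 7; 6; 5; 4; 9; 10; 11; 12; 3; 2; 1];
 [:: 0; 13; 12; 3; 2; 1; 10; 11; 6; 7; 8; 9; 4; 5];
 [:: 0; 13; 12; 3; 2; 7; 8; 9; 4; 5; 6; 11; 10; 1];
 [:: 0; 13; 12; 3; 4; 9; 8; 7; 2; 1; 10; 11; 6; 5];
 [:: 0; 13; 12; 3; 4; 5; 6; 11; 10; 9; 8; 7; 2; 1];
 [:: 0; 13; 12; 11; 10; 9; 8; 7; 6; 5; 4; 3; 2; 1];
 [:: 0; 13; 12; 11; 10; 1; 2; 3; 4; 9; 8; 7; 6; 5];
 [:: 0; 13; 12; 11; 6; 5; 4; 3; 2; 7; 8; 9; 10; 1];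
 [:: 0; 13; 12; 11; 6; 7; 8; 9; 10; 1; 2; 3; 4; 5];
 [:: 0; 5; 4; 9; 8; 13; 12; 3; 2; 7; 6; 11; 10; 1];
 [:: 0; 5; 4; 9; 8; 7; 6; 11; 10; 1; 2; 3; 12; 13];
 [:: 0; 5; 4; 9; 10; 11; 6; 7; 8; 13; 12; 3; 2; 1];
 [:: 0; 5; 4; 9; 10; 1; 2; 3; 12; 11; 6; 7; 8; 13];
 [:: 0; 5; 4; 3; 2; 1; 10; 9; 8; 7; 6; 11; 12; 13];
 [:: 0; 5; 4; 3; 2; 7; 6; 11; 12; 13; 8; 9; 10; 1];
 [:: 0; 5; 4; 3; 12; 11; 6; 7; 2; 1; 10; 9; 8; 13];
 [:: 0; 5; 4; 3; 12; 13; 8; 9; 10; 11; 6; 7; 2; 1];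
 [:: 0; 5; 6; 11; 10; 9; 4; 3; 12; 13; 8; 7; 2; 1];
 [:: 0; 5; 6; 11; 10; 1; 2; 7; 8; 9; 4; 3; 12; 13];
 [:: 0; 5; 6; 11; 12; 3; 4; 9; 10; 1; 2; 7; 8; 13];
 [:: 0; 5; 6; 11; 12; 13; 8; 7; 2; 3; 4; 9; 10; 1];
 [:: 0; 5; 6; 7; 8; 9; 4; 3; 2; 1; 10; 11; 12; 13];
 [:: 0; 5; 6; 7; 8; 13; 12; 11; 10; 9; 4; 3; 2; 1];
 [:: 0; 5; 6; 7; 2; 1; 10; 11; 12; 3; 4; 9; 8; 13];
 [:: 0; 5; 6; 7; 2; 3; 4; 9; 8; 13; 12; 11; 10; 1]].

Lemma heawood_cycles_hamiltonian :
  all (fun c => perm_eq c (iota 0 14) && cycle heawood_adjn c) heawood_cycles.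
Proof. by vm_compute. Qed.

Lemma heawood_cycles_cover :
  all (fun b => all (fun c => all (fun d =>
      uniq [:: 0; b; c; d] ==> has (subseq [:: 0; b; c; d]) heawood_cycles)
    (iota 0 14)) (iota 0 14)) (iota 0 14).
Proof. by vm_compute. Qed.

Lemma heawood_ordered_from0 (s : seq 'I_14) :
  size s = 3 -> uniq (ord0 :: s) ->
  exists c, hamiltonian_cycle heawood_adj c /\ in_cyclic_order (ord0 :: s) c.
Proof.
case: s => [|b [|c [|d []]]] // _ uniq_s.
have := allP (allP (allP heawood_cycles_cover _ (ord_mem_iota b))
  _ (ord_mem_iota c)) _ (ord_mem_iota d).
rewrite (map_inj_uniq val_inj (ord0 :: [:: b; c; d])) uniq_s.
case/hasP=> cy cy_in sub_cy.
have /andP[perm_cy cycle_cy] := allP heawood_cycles_hamiltonian _ cy_in.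
have cy_lt : {in cy, forall i, i < 14}.
  by move=> i; rewrite (perm_mem perm_cy) mem_iota.
have val_cy := map_val_inord cy_lt.
exists (map inord cy); split.
  by apply: (@hamiltonian_cycle_ord _ heawood_adjn); rewrite val_cy.
exists 0; rewrite rot0; have := map_subseq (@inord 13) sub_cy.
by rewrite /= !inord_val -[ord0]inord_val.
Qed.

Theorem theorem3p3 : k_ordered_hamiltonian heawood_adj 4.
Proof.
apply: (k_ordered_hamiltonian_transitive (v0 := ord0)).
- exact: heawood_vertex_transitive.
- exact: heawood_ordered_from0.
Qed.
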